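(* Let $G$ be an outer-string graph with an outer-string representation $\varphi$, and let $v_i,v_j$ be vertices whose strings intersect. Suppose cops occupy $v_i$ and $v_j$ and the robber occupies a vertex whose string is entirely contained in the bottom region of the pair $(\varphi(v_i),\varphi(v_j))$. Then the robber stays on vertices whose strings lie in this bottom region as long as cops stay on $v_i$ and $v_j$.
   Context: An outer-string representation of $G$ assigns to each vertex a bounded curve (string) in the closed upper half-plane meeting the $x$-axis in exactly one point, an endpoint of the string, with distinct vertices adjacent iff their strings intersect. A pair of intersecting strings divides the upper half-plane into regions: the unbounded top region, the bottom region incident with an interval of the $x$-axis, and possibly middle regions. Game of cops and robber: alternate moves, each piece stays or moves to an adjacent vertex; capture when a cop occupies the robber's vertex (a robber moving to a neighbor of a cop's vertex is captured in the next cop move). *)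

From HB Require Import structures.
From mathcomp Require Import all_boot all_order all_algebra.
From mathcomp Require Import all_classical all_reals all_analysis.
Set Implicit Arguments. Unset Strict Implicit. Unset Printing Implicit Defensive.
Import Order.TTheory GRing.Theory Num.Theory.
Import numFieldNormedType.Exports.
Local Open Scope classical_set_scope.
Local Open Scope ring_scope.

Section OuterString.
Variable R : realType.

Definition unit_int : set R := [set t | 0 <= t <= 1].

Definition upper_half : set (R * R) := [set p | 0 <= p.2].

(* A string is parametrized by g on [0,1]: a continuous curve in the closed
   upper half-plane meeting the x-axis exactly at its endpoint g 0. *)
Definition outer_curve (g : R -> R * R) : Prop :=
  {within unit_int, continuous g} /\
  (g 0).2 = 0 /\
  (forall t : R, 0 < t <= 1 -> 0 < (g t).2).

Definition str (g : R -> R * R) : set (R * R) := g @` unit_int.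

Definition outer_string_rep (V : Type) (e : rel V) (phi : V -> R -> R * R) : Prop :=
  (forall v, outer_curve (phi v)) /\
  (forall u v, u <> v -> (e u v <-> str (phi u) `&` str (phi v) !=set0)).

(* The bottom region of the pair (str g1, str g2): the connected component of
   (closed upper half-plane minus both strings) containing the open interval of
   the x-axis between the two base points; we name it by the midpoint of that
   interval. *)
Definition bottom_region (g1 g2 : R -> R * R) : set (R * R) :=
  connected_component (upper_half `\` (str g1 `|` str g2))
    (((g1 0).1 + (g2 0).1) / 2, 0).

End OuterString.

From HB Require Import structures.
From mathcomp Require Import all_boot all_order all_algebra.
From mathcomp Require Import all_classical all_reals all_analysis.
Set Implicit Arguments. Unset Strict Implicit. Unset Printing Implicit Defensive.
Import Order.TTheory GRing.Theory Num.Theory.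
Import numFieldNormedType.Exports.
Local Open Scope classical_set_scope.
Local Open Scope ring_scope.

(* A string is connected.  While the cops stay put, a robber move goes to a
   vertex whose string avoids both cop strings and meets the string of the
   previous vertex.  So the new string is a connected subset of the upper
   half-plane minus the cop strings that meets the bottom region, a connected
   component of that set, and hence lies inside it. *)

Lemma connected_component_sub_meet (T : topologicalType) (D A : set T) (x : T) :
  connected A -> A `<=` D -> A `&` connected_component D x !=set0 ->
  A `<=` connected_component D x.
Proof.
move=> Aconn AD [y [Ay Dxy]].
rewrite (same_connected_component Dxy).
exact: connected_component_max.
Qed.

Section Strings.
Variable R : realType.
Implicit Types g : R -> R * R.

Lemma unit_int_itv : @unit_int R = `[0, 1]%classic.
Proof. by apply/seteqP; split=> t /=; rewrite in_itv. Qed.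

Lemma str_connected g : outer_curve g -> connected (str g).
Proof.
move=> [gc _]; apply: connected_continuous_connected => //.
by rewrite unit_int_itv; exact: segment_connected.
Qed.

Lemma str_upper_half g : outer_curve g -> str g `<=` @upper_half R.
Proof.
move=> [_ [g0 gpos]] _ [t /andP[t0 t1] <-]; rewrite /upper_half /=.
have [->|tn0] := eqVneq t 0; first by rewrite g0.
by apply/ltW/gpos; rewrite t1 andbT lt_neqAle eq_sym tn0.
Qed.

End Strings.

Section Representation.
Variables (R : realType) (V : Type) (e : rel V) (phi : V -> R -> R * R).
Hypothesis rep : outer_string_rep e phi.

Lemma str_disjoint_nonadj u v :
  u <> v -> ~~ e u v -> ~ (str (phi u) `&` str (phi v) !=set0).
Proof. by move=> uv /negP nuv /(rep.2 _ _ uv). Qed.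

Lemma str_sub_cop_free u vi vj :
  vi <> u -> vj <> u -> ~~ e vi u -> ~~ e vj u ->
  str (phi u) `<=` @upper_half R `\` (str (phi vi) `|` str (phi vj)).
Proof.
move=> iu ju niu nju p pu; split; first exact: str_upper_half (rep.1 u) _ pu.
case=> [pi|pj].
- by apply: (str_disjoint_nonadj iu niu); exists p.
- by apply: (str_disjoint_nonadj ju nju); exists p.
Qed.

Lemma bottom_region_move u w vi vj : irreflexive e ->
  str (phi u) `<=` bottom_region (phi vi) (phi vj) ->
  w = u \/ e u w ->
  vi <> w -> vj <> w -> ~~ e vi w -> ~~ e vj w ->
  str (phi w) `<=` bottom_region (phi vi) (phi vj).
Proof.
move=> irr ubot [-> //|euw] iw jw niw njw.
have uw : u <> w by move=> uw; move: euw; rewrite uw irr.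
have [y [yu yw]] := (rep.2 _ _ uw).1 euw.
apply: connected_component_sub_meet; first exact: str_connected (rep.1 w).
  exact: str_sub_cop_free.
by exists y; split => //; apply: ubot.
Qed.

End Representation.

(* Cops sit on vi and vj for the whole time; r k is the robber's vertex after
   its k-th move (r 0 = initial vertex).  A robber on a vertex of the closed
   neighbourhood of a cop is captured, so "the robber is still in the game at
   time n" means r 0, ..., r n avoid the closed neighbourhoods of vi and vj. *)
Theorem lemma3 (R : realType) (V : finType) (e : rel V) (phi : V -> R -> R * R)
    (vi vj : V) :
  irreflexive e ->
  outer_string_rep e phi ->
  vi <> vj ->
  str (phi vi) `&` str (phi vj) !=set0 ->
  forall r : nat -> V,
    str (phi (r 0%N)) `<=` bottom_region (phi vi) (phi vj) ->
    (forall k : nat, r k.+1 = r k \/ e (r k) (r k.+1)) ->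
    forall n : nat,
      (forall k : nat, (k <= n)%N ->
         [/\ r k <> vi, r k <> vj, ~~ e vi (r k) & ~~ e vj (r k)]) ->
      forall k : nat, (k <= n)%N ->
        str (phi (r k)) `<=` bottom_region (phi vi) (phi vj).
Proof.
move=> irr rep _ _ r r0 step n avoid.
elim=> [_ //|k IHk Skn].
have [ri rj nir njr] := avoid k.+1 Skn.
exact: (bottom_region_move rep irr (IHk (ltnW Skn)) (step k) (nesym ri) (nesym rj) nir njr).
Qed.
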